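(* Let $a,b>0$, $\delta>0$, $\theta\in[0,1]$, $\mathcal{X}=\{x\in\mathbb{R}^d:\|x\|_\infty\le b\}$, and for $i\in[d]$, $x\in\mathcal{X}$ let $f_i^+(x)=\theta b|x(i)+b|+\frac{1-\theta}4(x(i)+b)^2$ and $f_i^-(x)=\theta b|x(i)-b|+\frac{1-\theta}4(x(i)-b)^2$. For $v\in\{-1,1\}^d$ let \[ g_v(x)=a\sum_{i=1}^d\Big(\frac{1+2\delta v(i)}2f_i^+(x)+\frac{1-2\delta v(i)}2f_i^-(x)\Big), \] and $\mathcal{G}_{\mathtt{sc}}=\{g_v:v\in\{-1,1\}^d\}$, decomposed coordinatewise as $g_v(x)=\sum_ig_{i,v(i)}(x(i))$ with, for $\nu\in\{-1,1\}$ and $y\in\mathcal{X}_i=[-b,b]$, $g_{i,\nu}(y)=a\big(\frac{1+2\delta\nu}2(\theta b|y+b|+\frac{1-\theta}4(y+b)^2)+\frac{1-2\delta\nu}2(\theta b|y-b|+\frac{1-\theta}4(y-b)^2)\big)$. If $\frac{1-\theta}{1+\theta}\ge2\delta$, then \[ \psi(\mathcal{G}_{\mathtt{sc}})\ \ge\ \frac{2ab^2\delta^2}{1-\theta}. \]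
   Context: For such a decomposable family, $\psi_i(\mathcal{G})=\min_{y\in\mathcal{X}_i}\big(g_{i,1}(y)+g_{i,-1}(y)-(\min_{y'\in\mathcal{X}_i}g_{i,1}(y')+\min_{y'\in\mathcal{X}_i}g_{i,-1}(y'))\big)$ and $\psi(\mathcal{G})=\min_{i\in[d]}\psi_i(\mathcal{G})$. *)

From HB Require Import structures.
From mathcomp Require Import all_boot all_order all_algebra.
From mathcomp Require Import all_classical all_reals.
Set Implicit Arguments. Unset Strict Implicit. Unset Printing Implicit Defensive.
Import Order.TTheory GRing.Theory Num.Theory.
Local Open Scope classical_set_scope.
Local Open Scope ring_scope.

Definition Xcoord (R : realType) (b : R) : set R := [set y : R | -b <= y <= b].

(* Minimum of f over A (the infimum; it is attained in our uses since the
   functions are continuous and A is compact). *)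
Definition min_over (R : realType) (A : set R) (f : R -> R) : R := inf (f @` A).

(* f_i^+ and f_i^- as functions of the coordinate y = x(i). *)
Definition fplus (R : realType) (b theta y : R) : R :=
  theta * b * `|y + b| + (1 - theta) / 4 * (y + b) ^+ 2.
Definition fminus (R : realType) (b theta y : R) : R :=
  theta * b * `|y - b| + (1 - theta) / 4 * (y - b) ^+ 2.

Definition g_sc (R : realType) (a b delta theta nu y : R) : R :=
  a * ((1 + 2 * delta * nu) / 2 * fplus b theta y
       + (1 - 2 * delta * nu) / 2 * fminus b theta y).

Definition g_v (R : realType) (d : nat) (a b delta theta : R)
  (v : 'I_d -> R) (x : 'I_d -> R) : R :=
  \sum_(i < d) g_sc a b delta theta (v i) (x i).

Definition psi_i (R : realType) (d : nat) (X : 'I_d -> set R)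
  (g : 'I_d -> R -> R -> R) (i : 'I_d) : R :=
  min_over (X i) (fun y => g i 1 y + g i (-1) y
                           - (min_over (X i) (g i 1) + min_over (X i) (g i (-1)))).

(* psi(G) = min_{i in [d]} psi_i(G)  (d >= 1, so the minimum over a finite
   nonempty set is its infimum). *)
Definition psi (R : realType) (d : nat) (X : 'I_d -> set R)
  (g : 'I_d -> R -> R -> R) : R :=
  inf [set psi_i X g i | i in [set: 'I_d]].

From HB Require Import structures.
From mathcomp Require Import all_boot all_order all_algebra.
From mathcomp Require Import all_classical all_reals.
From mathcomp Require Import ring lra.
Import Order.TTheory GRing.Theory Num.Theory.
Local Open Scope classical_set_scope.
Local Open Scope ring_scope.

(** On [[-b, b]] the absolute values in [f^+] and [f^-] open up, and
    [g_{i,nu}] is the parabola [a ((1-theta)/4 y^2 + delta b (1+theta) nu y + c)].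
    For [nu = +-1] its vertex [-2 delta b (1+theta) nu / (1-theta)] lies in
    [[-b, b]] because [2 delta (1+theta) <= 1-theta], so both minima are
    attained there and lie [a K] below the value at [0], where
    [K = delta^2 b^2 (1+theta)^2 / (1-theta)].  The linear terms cancel in
    [g_{i,1} + g_{i,-1}], which is therefore minimal at [0]; hence
    [psi_i = 2 a K], and [(1+theta)^2 >= 1] gives the bound. *)

Section MinOver.
Variable R : realType.

Lemma min_overE (A : set R) (f : R -> R) x :
  A x -> (forall y, A y -> f x <= f y) -> min_over A f = f x.
Proof.
move=> Ax fx_min; apply/le_anti/andP; split.
- by apply: ge_inf; [exists (f x); move=> _ [y Ay <-]; exact: fx_min | exists x].
- by apply: lb_le_inf; [exists (f x), x | move=> _ [y Ay <-]; exact: fx_min].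
Qed.

Lemma le_psi (d : nat) (X : 'I_d -> set R) (g : 'I_d -> R -> R -> R) m :
  (0 < d)%N -> (forall i, m <= psi_i X g i) -> m <= psi X g.
Proof.
move=> d_gt0 m_le; apply: lb_le_inf => [|_ [i _ <-]]; last exact: m_le.
by exists (psi_i X g (Ordinal d_gt0)), (Ordinal d_gt0).
Qed.

End MinOver.

Section HardInstance.
Variables (R : realType) (a b delta theta : R).
Hypotheses (a_ge0 : 0 <= a) (b_ge0 : 0 <= b) (delta_ge0 : 0 <= delta).
Hypotheses (theta_ge0 : 0 <= theta) (theta_lt1 : theta < 1).
Hypothesis vertex_inside : 2 * delta * (1 + theta) <= 1 - theta.

Let one_sub_theta_gt0 : 0 < 1 - theta. Proof. by rewrite subr_gt0. Qed.

Let g := g_sc a b delta theta.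
Let K := delta ^+ 2 * b ^+ 2 * (1 + theta) ^+ 2 / (1 - theta).
Let g_min := theta * b ^+ 2 + (1 - theta) / 4 * b ^+ 2 - K.
Let vertex nu := - (2 * delta * b * (1 + theta) * nu / (1 - theta)).

Lemma g_sc_on_Xcoord nu y : Xcoord b y ->
  g nu y = a * (theta * b ^+ 2 + (1 - theta) / 4 * (y ^+ 2 + b ^+ 2)
                + delta * b * (1 + theta) * nu * y).
Proof.
move=> /andP[y_ge y_le]; rewrite /g /g_sc /fplus /fminus.
rewrite (ger0_norm (x := y + b)); last by lra.
rewrite (ler0_norm (x := y - b)); last by lra.
by field.
Qed.

Lemma g_sc_complete_square nu y : nu ^+ 2 = 1 -> Xcoord b y ->
  g nu y = a * (g_min + (1 - theta) / 4 * (y - vertex nu) ^+ 2).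
Proof.
move=> nu2 Xy; have one_sub_theta_neq0 : 1 - theta != 0 by rewrite gt_eqF.
by rewrite g_sc_on_Xcoord // /g_min /K /vertex; field: nu2.
Qed.

Lemma vertex_in_Xcoord nu : nu ^+ 2 = 1 -> Xcoord b (vertex nu).
Proof.
move=> nu2; have norm_nu : `|nu| = 1.
  by apply/eqP; rewrite -(@eqrXn2 _ 2) ?normr_ge0 // real_normK ?num_real // nu2 expr1n.
rewrite /Xcoord /= -ler_norml /vertex normrN normrM normfV (gtr0_norm one_sub_theta_gt0).
rewrite ler_pdivrMr // !normrM norm_nu mulr1 (ger0_norm b_ge0) (ger0_norm delta_ge0).
rewrite (ger0_norm (x := 1 + theta)); last by move: theta_ge0; lra.
rewrite (ger0_norm (x := 2)) //.
by move: vertex_inside b_ge0; nra.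
Qed.

Lemma min_over_g_sc nu : nu ^+ 2 = 1 -> min_over (Xcoord b) (g nu) = a * g_min.
Proof.
move=> nu2; have Xv := vertex_in_Xcoord _ nu2.
have g_vertex : g nu (vertex nu) = a * g_min.
  by rewrite g_sc_complete_square // subrr expr0n mulr0 addr0.
rewrite (@min_overE _ _ _ (vertex nu)) // g_vertex => y Xy.
rewrite g_sc_complete_square // ler_wpM2l // lerDl.
by apply: mulr_ge0; [apply: divr_ge0 => //; exact: ltW | exact: sqr_ge0].
Qed.

Lemma psi_i_g_sc (d : nat) (i : 'I_d) :
  psi_i (fun=> Xcoord b) (fun=> g) i = 2 * a * K.
Proof.
rewrite /psi_i !min_over_g_sc ?sqrrN ?expr1n //.
have X0 : Xcoord b 0 by rewrite /Xcoord /= oppr_le0 b_ge0.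
have gap y : Xcoord b y -> g 1 y + g (-1) y - (a * g_min + a * g_min)
                            = 2 * a * K + a * ((1 - theta) / 2 * y ^+ 2).
  by move=> Xy; rewrite !g_sc_on_Xcoord // /g_min; field.
rewrite (@min_overE _ _ _ 0) // gap // expr0n /= mulr0 mulr0 addr0 //.
move=> y Xy; rewrite gap // lerDl; apply: mulr_ge0 => //.
by apply: mulr_ge0; [apply: divr_ge0 => //; exact: ltW | exact: sqr_ge0].
Qed.

End HardInstance.

Theorem lemma5 (R : realType) (d : nat) (a b delta theta : R) :
  (0 < d)%N -> 0 < a -> 0 < b -> 0 < delta -> 0 <= theta <= 1 ->
  (1 - theta) / (1 + theta) >= 2 * delta ->
  psi (fun _ : 'I_d => Xcoord b) (fun _ nu y => g_sc a b delta theta nu y)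
    >= 2 * a * b ^+ 2 * delta ^+ 2 / (1 - theta).
Proof.
move=> d_gt0 a_gt0 b_gt0 delta_gt0 /andP[theta_ge0 theta_le1] delta_small.
have theta_lt1 : theta < 1.
  rewrite lt_neqAle theta_le1 andbT; apply: contraTneq delta_small => ->.
  by rewrite subrr mul0r -ltNge; lra.
have vertex_inside : 2 * delta * (1 + theta) <= 1 - theta by rewrite -ler_pdivlMr //; lra.
apply: le_psi => // i.
rewrite (psi_i_g_sc _ _ _ _ _ (ltW a_gt0) (ltW b_gt0) (ltW delta_gt0)) //.
have theta_gt : 0 < 1 - theta by rewrite subr_gt0.
set bound := 2 * a * b ^+ 2 * delta ^+ 2 / (1 - theta).
have -> : 2 * a * (delta ^+ 2 * b ^+ 2 * (1 + theta) ^+ 2 / (1 - theta))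
          = bound * (1 + theta) ^+ 2 by rewrite /bound; field; rewrite gt_eqF.
apply: ler_peMr; last by rewrite expr2; nra.
by apply/ltW; rewrite /bound divr_gt0 // ?mulr_gt0 ?exprn_gt0.
Qed.
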